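(* Let $w\in W_0^J$ and $\beta\in\Delta_0^+\setminus\Delta_J^+$ be such that there is an edge $\lfloor wr_\beta\rfloor\xleftarrow{\beta}w$ in the parabolic quantum Bruhat graph. Let $j\in I_0$. (1) If $\langle w\Lambda,\alpha_j^\vee\rangle>0$ and $w\beta\ne\pm\alpha_j$, then $\langle wr_\beta\Lambda,\alpha_j^\vee\rangle>0$; moreover both $r_j\lfloor wr_\beta\rfloor$ and $r_jw$ lie in $W_0^J$, and there is an edge $r_j\lfloor wr_\beta\rfloor\xleftarrow{\beta}r_jw$. (2) If $\langle wr_\beta\Lambda,\alpha_j^\vee\rangle<0$ and $w\beta\ne\pm\alpha_j$, then $\langle w\Lambda,\alpha_j^\vee\rangle<0$; moreover both $r_j\lfloor wr_\beta\rfloor$ and $r_jw$ lie in $W_0^J$, and there is an edge $r_j\lfloor wr_\beta\rfloor\xleftarrow{\beta}r_jw$. (3) If $\langle wr_\beta\Lambda,\alpha_j^\vee\rangle<0$ and $\langle w\Lambda,\alpha_j^\vee\rangle\ge0$, then $w\beta=\pm\alpha_j$. (4) If $\langle wr_\beta\Lambda,\alpha_j^\vee\rangle\le0$ and $\langle w\Lambda,\alpha_j^\vee\rangle>0$, then $w\beta=\pm\alpha_j$.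
   Context: Let $\Delta_0$ be the (finite, reduced, irreducible) root system of the finite-dimensional simple Lie algebra underlying an untwisted affine Lie algebra, with simple roots $\alpha_j$, simple coroots $\alpha_j^\vee$ ($j\in I_0$), positive roots $\Delta_0^+$, Weyl group $W_0$ generated by simple reflections $r_j$. Let $\lambda=\sum_{i\in I_0}m_i\varpi_i$ ($m_i\in\mathbb{Z}_{\ge0}$) be a level-zero dominant integral weight and $\Lambda=\mathrm{cl}(\lambda)$ its image modulo $\mathbb{C}\delta$, so $\langle\Lambda,\alpha_j^\vee\rangle=m_j$ for $j\in I_0$; $W_0$ acts on $\Lambda$. Let $J=\{j\in I_0\mid\langle\Lambda,\alpha_j^\vee\rangle=0\}$, $W_J=\langle r_j\mid j\in J\rangle$, $\Delta_J^+=\Delta_0^+\cap\bigoplus_{j\in J}\mathbb{Z}\alpha_j$, $W_0^J$ the set of minimal-length representatives of $W_0/W_J$, $\lfloor w\rfloor\in W_0^J$ the representative of $wW_J$, $\ell$ the length, $\rho=\frac12\sum_{\alpha\in\Delta_0^+}\alpha$, $\rho_J=\frac12\sum_{\alpha\in\Delta_J^+}\alpha$. The parabolic quantum Bruhat graph has vertex set $W_0^J$ and a directed edge $\lfloor wr_\beta\rfloor\xleftarrow{\beta}w$ for $w\in W_0^J$, $\beta\in\Delta_0^+\setminus\Delta_J^+$, whenever either $\ell(\lfloor wr_\beta\rfloor)=\ell(w)+1$ (Bruhat edge) or $\ell(\lfloor wr_\beta\rfloor)=\ell(w)-2\langle\rho-\rho_J,\beta^\vee\rangle+1$ (quantum edge).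 *)

From HB Require Import structures.
From mathcomp Require Import all_boot all_order all_algebra.
From Stdlib Require Import ClassicalEpsilon.
Set Implicit Arguments. Unset Strict Implicit. Unset Printing Implicit Defensive.
Import Order.TTheory GRing.Theory Num.Theory.
Local Open Scope ring_scope.

Section RootData.
Variable R : realFieldType.
Variable n : nat.
Local Notation V := 'cV[R]_n.

Definition pairing (x y : V) : R := (x^T *m y) ord0 ord0.
(* coroot b^v = 2 b / (b, b), so that <x, b^v> = pairing x (coroot b) *)
Definition coroot (b : V) : V := (2 / pairing b b) *: b.
(* reflection r_b : x |-> x - <x, b^v> b, as a matrix acting on the left *)
Definition refl (b : V) : 'M[R]_n := 1%:M - (2 / pairing b b) *: (b *m b^T).

Variable Phi : seq V.
Variable alpha : 'I_n -> V.    (* the simple roots, indexed by I_0 = 'I_n *)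

(* Phi is a finite, reduced, irreducible root system in V (spanning V is a
   consequence of the base axioms below) *)
Definition is_reduced_irreducible_root_system : Prop :=
  [/\ uniq Phi, 0 \notin Phi,
      (forall a b, a \in Phi -> b \in Phi -> refl a *m b \in Phi),
      (forall a b, a \in Phi -> b \in Phi ->
         exists z : int, pairing b (coroot a) = z%:~R)
    & (forall a (c : R), a \in Phi -> c *: a \in Phi -> c = 1 \/ c = -1)]
  /\ (forall P : pred V, (exists2 a, a \in Phi & P a) ->
        (exists2 b, b \in Phi & ~~ P b) ->
        exists a b, [/\ a \in Phi, b \in Phi, P a, ~~ P b & pairing a b != 0]).

Definition is_base : Prop :=
  [/\ (forall j, alpha j \in Phi),
      (forall c : 'I_n -> R, \sum_j c j *: alpha j = 0 -> forall j, c j = 0)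
    & (forall b, b \in Phi -> exists c : 'I_n -> nat,
          b = \sum_j (c j)%:R *: alpha j \/ b = - \sum_j (c j)%:R *: alpha j)].

Definition Amat : 'M[R]_n := \matrix_(i < n, j < n) alpha j i ord0.
Definition coords (x : V) : V := invmx Amat *m x.

Definition posroot (b : V) : bool :=
  (b \in Phi) && [forall j : 'I_n, 0 <= coords b j ord0].

Definition sref (j : 'I_n) : 'M[R]_n := refl (alpha j).
Definition wordmx (s : seq 'I_n) : 'M[R]_n :=
  foldr (fun j M => sref j *m M) 1%:M s.
Definition inW0 (w : 'M[R]_n) : Prop := exists s : seq 'I_n, wordmx s = w.
Definition has_word_of_size (w : 'M[R]_n) (k : nat) : bool :=
  [exists s : k.-tuple 'I_n, wordmx s == w].
Definition ell (w : 'M[R]_n) : nat :=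
  match excluded_middle_informative (exists k, has_word_of_size w k) with
  | left h => ex_minn h
  | right _ => 0%N
  end.

Variable Lam : V.

Definition inJ (j : 'I_n) : bool := pairing Lam (coroot (alpha j)) == 0.
Definition posrootJ (b : V) : bool :=
  posroot b && [forall j : 'I_n, (~~ inJ j) ==> (coords b j ord0 == 0)].
Definition inWJ (v : 'M[R]_n) : Prop :=
  exists s : seq 'I_n, all inJ s /\ wordmx s = v.
Definition inW0J (w : 'M[R]_n) : Prop :=
  inW0 w /\ forall v, inWJ v -> (ell w <= ell (w *m v))%N.
(* floor x : the (unique) element of W_0^J in x W_J *)
Definition floor (x : 'M[R]_n) : 'M[R]_n :=
  match excluded_middle_informative
          (exists u, inW0J u /\ exists v, inWJ v /\ u = x *m v) with
  | left h => proj1_sig (constructive_indefinite_description _ h)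
  | right _ => x
  end.

Definition rho : V := 2^-1 *: \sum_(a <- Phi | posroot a) a.
Definition rhoJ : V := 2^-1 *: \sum_(a <- Phi | posrootJ a) a.

(* edge  u <-(b)- w  in the parabolic quantum Bruhat graph *)
Definition qbg_edge (w : 'M[R]_n) (b : V) (u : 'M[R]_n) : Prop :=
  [/\ inW0J w, posroot b && ~~ posrootJ b, u = floor (w *m refl b)
    & (ell u = (ell w).+1 \/
       (ell u)%:R = (ell w)%:R - 2 * pairing (rho - rhoJ) (coroot b) + 1)].

End RootData.

From Pilot Require Import Defs.
From mathcomp Require Import all_boot all_order all_algebra.
From mathcomp Require Import ring lra.
From Stdlib Require Import Classical ClassicalEpsilon.
Import Order.TTheory GRing.Theory Num.Theory.
Set Implicit Arguments. Unset Strict Implicit. Unset Printing Implicit Defensive.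
Local Open Scope ring_scope.

(* The length of [w] in [W0] is the number of negative roots on which [w *m hvec]
   is positive, and for [w] in [W0^J] the same count with [w *m Lam] in place of
   [w *m hvec] (here [hvec] is the height functional).  An edge
   [floor (w *m refl b) <-b- w] is therefore a jump of this count from
   [mu = w *m Lam] to [refl th *m mu], [th = w *m b]: by [+1] for a Bruhat edge and
   by [1 - \sum_((mu, d) > 0) <d, th^v> = 1 - 2 <rho - rhoJ, b^v>] for a quantum one,
   and these are the extreme values such a jump can take.  Conjugating by the simple
   reflection [r_j] changes the count at [mu] by [sg <mu, alpha_j^v>] and at
   [refl th *m mu] by [sg <refl th *m mu, alpha_j^v>]; for [th <> +-alpha_j] the
   conjugated jump obeys the same extreme bound, which forces
   [sg <w Lam, alpha_j^v> <= sg <w r_b Lam, alpha_j^v>].  This gives (3), (4) and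
   the sign claims of (1), (2).  When both signs agree and are nonzero, [r_j]
   preserves minimality and shifts both lengths equally, so the edge is carried
   over to [r_j w]. *)

Lemma sgr_le_gt0 (R : realDomainType) (x y : R) :
  Num.sg x <= Num.sg y -> 0 < x -> 0 < y.
Proof. by move=> le x_gt0; rewrite -sgr_gt0 (lt_le_trans _ le) ?sgr_gt0. Qed.

Lemma sgr_le_ge0 (R : realDomainType) (x y : R) :
  Num.sg x <= Num.sg y -> 0 <= x -> 0 <= y.
Proof. by move=> le x_ge0; rewrite -sgr_ge0 (le_trans _ le) ?sgr_ge0. Qed.

Lemma sgr_le_lt0 (R : realDomainType) (x y : R) :
  Num.sg x <= Num.sg y -> y < 0 -> x < 0.
Proof. by move=> le y_lt0; rewrite -sgr_lt0 (le_lt_trans le) ?sgr_lt0. Qed.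

Lemma int_ge1 (R : numDomainType) (x : R) :
  (exists z : int, x = z%:~R) -> 0 < x -> 1 <= x.
Proof. by case=> z ->; rewrite ltr0z ler1z gtz0_ge1. Qed.

(** * Inner product and reflections *)

Section Pairing.
Variables (R : realFieldType) (n : nat).
Local Notation V := 'cV[R]_n.

Lemma mulmx_ext (A B : 'M[R]_n) : (forall x : V, A *m x = B *m x) -> A = B.
Proof.
move=> AB; apply/matrixP=> i j.
have := congr1 (fun M : V => M i 0) (AB (delta_mx j 0)).
by rewrite -!colE !mxE.
Qed.

Lemma pairingE (x y : V) : pairing x y = \sum_i x i 0 * y i 0.
Proof. by rewrite /pairing !mxE; apply: eq_bigr => i _; rewrite mxE. Qed.

Lemma pairingC (x y : V) : pairing x y = pairing y x.
Proof. by rewrite !pairingE; apply: eq_bigr => i _; rewrite mulrC. Qed.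

Lemma pairingDr (x y z : V) : pairing x (y + z) = pairing x y + pairing x z.
Proof. by rewrite !pairingE -big_split; apply: eq_bigr => i _; rewrite mxE mulrDr. Qed.

Lemma pairingZr (x y : V) c : pairing x (c *: y) = c * pairing x y.
Proof. by rewrite !pairingE mulr_sumr; apply: eq_bigr => i _; rewrite mxE mulrCA. Qed.

Lemma pairingNr (x y : V) : pairing x (- y) = - pairing x y.
Proof. by rewrite -scaleN1r pairingZr mulN1r. Qed.

Lemma pairingBr (x y z : V) : pairing x (y - z) = pairing x y - pairing x z.
Proof. by rewrite pairingDr pairingNr. Qed.

Lemma pairing0r (x : V) : pairing x 0 = 0.
Proof. by rewrite -(scale0r 0) pairingZr mul0r. Qed.

Lemma pairingZl (x y : V) c : pairing (c *: y) x = c * pairing y x.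
Proof. by rewrite !(pairingC _ x) pairingZr. Qed.

Lemma pairingNl (x y : V) : pairing (- y) x = - pairing y x.
Proof. by rewrite !(pairingC _ x) pairingNr. Qed.

Lemma pairingBl (x y z : V) : pairing (y - z) x = pairing y x - pairing z x.
Proof. by rewrite !(pairingC _ x) pairingBr. Qed.

Lemma pairing_sumr (x : V) I (r : seq I) (P : pred I) (F : I -> V) :
  pairing x (\sum_(i <- r | P i) F i) = \sum_(i <- r | P i) pairing x (F i).
Proof.
elim/big_rec2: _ => [|i y1 y2 _ <-]; first exact: pairing0r.
by rewrite pairingDr.
Qed.

Lemma pairing_suml (x : V) I (r : seq I) (P : pred I) (F : I -> V) :
  pairing (\sum_(i <- r | P i) F i) x = \sum_(i <- r | P i) pairing (F i) x.
Proof. by rewrite pairingC pairing_sumr; apply: eq_bigr => i _; rewrite pairingC. Qed.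

Lemma pairing_mulmxl (M : 'M[R]_n) (x y : V) : pairing (M *m x) y = pairing x (M^T *m y).
Proof. by rewrite /pairing trmx_mul mulmxA. Qed.

Lemma pairing_self_eq0 (x : V) : (pairing x x == 0) = (x == 0).
Proof.
apply/idP/eqP=> [|->]; last by rewrite pairing0r.
rewrite pairingE psumr_eq0 => [/allP x0|i _]; last by rewrite -expr2 sqr_ge0.
apply/matrixP=> i j; rewrite (ord1 j) mxE.
have /x0 : i \in index_enum 'I_n by rewrite mem_index_enum.
by rewrite /= -expr2 sqrf_eq0 => /eqP.
Qed.

Lemma pairing_self_gt0 (x : V) : x != 0 -> 0 < pairing x x.
Proof.
rewrite lt_def pairing_self_eq0 => -> /=.
by rewrite pairingE sumr_ge0 // => i _; rewrite -expr2 sqr_ge0.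
Qed.

Lemma corootE (x b : V) : pairing x (coroot b) = 2 / pairing b b * pairing x b.
Proof. exact: pairingZr. Qed.

Lemma sg_pairing_coroot (x b : V) : b != 0 ->
  Num.sg (pairing x (coroot b)) = Num.sg (pairing x b).
Proof.
move=> nz; rewrite corootE sgrM gtr0_sg ?mul1r //.
by rewrite divr_gt0 ?pairing_self_gt0.
Qed.

Lemma pairing_coroot_self (b : V) : b != 0 -> pairing b (coroot b) = 2.
Proof. by move=> nz; rewrite corootE mulfVK // pairing_self_eq0. Qed.

Lemma reflE (b x : V) : refl b *m x = x - pairing x (coroot b) *: b.
Proof.
have bbx : b *m (b^T *m x) = pairing b x *: b.
  by apply/matrixP=> i j; rewrite (ord1 j) !mxE big_ord1 mulrC.
rewrite /refl mulmxBl mul1mx -scalemxAl -mulmxA bbx scalerA.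
by rewrite corootE (pairingC x).
Qed.

Lemma trmx_refl (b : V) : (refl b)^T = refl b.
Proof. by rewrite /refl linearB /= trmx1 linearZ /= trmx_mul trmxK. Qed.

Lemma refl_self (b : V) : b != 0 -> refl b *m b = - b.
Proof.
by move=> nz; rewrite reflE pairing_coroot_self // scaler_nat mulr2n opprD addNKr.
Qed.

Lemma pairing_refl (b x y : V) : b != 0 ->
  pairing (refl b *m x) (refl b *m y) = pairing x y.
Proof.
move=> nz; rewrite !reflE pairingBl !pairingBr !pairingZl !pairingZr.
have bb0 : pairing b b != 0 by rewrite pairing_self_eq0.
by rewrite (pairingC b y); field.
Qed.

Lemma pairing_refl_self (b x : V) : b != 0 -> pairing (refl b *m x) b = - pairing x b.
Proof.
move=> nz; have := pairing_refl x b nz.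
by rewrite refl_self // pairingNr => <-; rewrite opprK.
Qed.

Lemma pairing_refl_coroot (b x : V) : b != 0 ->
  pairing (refl b *m x) (coroot b) = - pairing x (coroot b).
Proof. by move=> nz; rewrite !corootE pairing_refl_self // mulrN. Qed.

Lemma refl_invol (b : V) : b != 0 -> refl b *m refl b = 1%:M.
Proof.
move=> nz; apply: mulmx_ext => x; rewrite mul1mx -mulmxA [LHS]reflE.
by rewrite pairing_refl_coroot // reflE scaleNr opprK subrK.
Qed.

Lemma reflN (b : V) : refl (- b) = refl b.
Proof. by rewrite /refl pairingNl pairingNr opprK linearN /= mulmxN mulNmx opprK. Qed.

Definition orthmx (M : 'M[R]_n) := M^T *m M = 1%:M.

Lemma orthmxC M : orthmx M -> M *m M^T = 1%:M.
Proof. exact: mulmx1C. Qed.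

Lemma orthmx1 : orthmx 1%:M.
Proof. by rewrite /orthmx trmx1 mulmx1. Qed.

Lemma orthmx_mul M N : orthmx M -> orthmx N -> orthmx (M *m N).
Proof.
by move=> oM oN; rewrite /orthmx trmx_mul mulmxA -(mulmxA _ M^T) oM mulmx1 oN.
Qed.

Lemma orthmx_refl (b : V) : b != 0 -> orthmx (refl b).
Proof. by move=> nz; rewrite /orthmx trmx_refl refl_invol. Qed.

Lemma pairing_orthmx M (x y : V) : orthmx M -> pairing (M *m x) (M *m y) = pairing x y.
Proof. by move=> oM; rewrite pairing_mulmxl mulmxA oM mul1mx. Qed.

Lemma refl_conj M (b : V) : orthmx M -> b != 0 -> refl (M *m b) = M *m refl b *m M^T.
Proof.
move=> oM nz; apply: mulmx_ext => x.
rewrite reflE -!mulmxA reflE mulmxBr -scalemxAr mulmxA orthmxC // mul1mx.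
congr (_ - _ *: _); rewrite !corootE pairing_orthmx //.
by rewrite -[x in pairing x (M *m b)]mul1mx -(orthmxC oM) -mulmxA pairing_orthmx.
Qed.

End Pairing.

Section RootSystem.
Variables (R : realFieldType) (n : nat).
Local Notation V := 'cV[R]_n.
Variables (Phi : seq V) (alpha : 'I_n -> V).
Hypothesis hPhi : is_reduced_irreducible_root_system Phi.
Hypothesis hbase : is_base Phi alpha.

Local Notation posroot := (posroot Phi alpha).
Local Notation coords := (coords alpha).
Local Notation Amat := (Amat alpha).
Local Notation sref := (sref alpha).
Local Notation wordmx := (wordmx alpha).
Local Notation inW0 := (inW0 alpha).

Lemma Phi_uniq : uniq Phi. Proof. by case: hPhi => -[]. Qed.

Lemma Phi_neq0 a : a \in Phi -> a != 0.
Proof. by case: hPhi => -[_ Phi0 _ _ _] _; apply: contraTneq => ->. Qed.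

Lemma Phi_refl a b : a \in Phi -> b \in Phi -> refl a *m b \in Phi.
Proof. by case: hPhi => -[_ _ Prefl _ _] _; apply: Prefl. Qed.

Lemma Phi_coroot_int a b : a \in Phi -> b \in Phi ->
  exists z : int, pairing b (coroot a) = z%:~R.
Proof. by case: hPhi => -[_ _ _ Pint _] _; apply: Pint. Qed.

Lemma Phi_reduced a c : a \in Phi -> c *: a \in Phi -> c = 1 \/ c = -1.
Proof. by case: hPhi => -[_ _ _ _ Pred] _; apply: Pred. Qed.

Lemma Phi_opp a : a \in Phi -> - a \in Phi.
Proof. by move=> aP; rewrite -refl_self ?Phi_neq0 // Phi_refl. Qed.

Lemma Phi_alpha j : alpha j \in Phi. Proof. by case: hbase. Qed.

Lemma alpha_neq0 j : alpha j != 0. Proof. exact/Phi_neq0/Phi_alpha. Qed.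

Lemma sref_invol j : sref j *m sref j = 1%:M.
Proof. exact/refl_invol/alpha_neq0. Qed.

(** * Coordinates and positive roots *)

Lemma Amat_mul (c : V) : Amat *m c = \sum_i c i 0 *: alpha i.
Proof.
apply/matrixP=> i j; rewrite (ord1 j) !mxE summxE; apply: eq_bigr => k _.
by rewrite !mxE mulrC.
Qed.

Lemma Amat_unit : Amat \in unitmx.
Proof.
rewrite -unitmx_tr -row_free_unit -kermx_eq0; apply/negPn/negP => nz.
have [i ri] : exists i, row i (kermx Amat^T) != 0.
  apply/existsP; apply: contraR nz => /existsPn ri0.
  by apply/eqP/row_matrixP => i; rewrite row0; apply/eqP/negPn/ri0.
set u := row i _ in ri.
have : Amat *m u^T = 0.
  by rewrite -[Amat]trmxK -trmx_mul /u -row_mul mulmx_ker row0 trmx0.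
case: hbase => _ indep _; rewrite Amat_mul => /indep u0.
by move/eqP: ri; apply; apply/rowP => k; have := u0 k; rewrite !mxE.
Qed.

Lemma coords_expand x : x = \sum_i coords x i 0 *: alpha i.
Proof. by rewrite -Amat_mul /Defs.coords mulmxA mulmxV ?Amat_unit // mul1mx. Qed.

Lemma coords_comb (c : 'I_n -> R) i : coords (\sum_j c j *: alpha j) i 0 = c i.
Proof.
have -> : \sum_j c j *: alpha j = Amat *m (\col_j c j).
  by rewrite Amat_mul; apply: eq_bigr => j _; rewrite mxE.
by rewrite /Defs.coords mulmxA mulVmx ?Amat_unit // mul1mx mxE.
Qed.

Lemma coordsB x y i : coords (x - y) i 0 = coords x i 0 - coords y i 0.
Proof. by rewrite /Defs.coords mulmxBr !mxE. Qed.

Lemma coordsZ c x i : coords (c *: x) i 0 = c * coords x i 0.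
Proof. by rewrite /Defs.coords -scalemxAr mxE. Qed.

Lemma coordsN x i : coords (- x) i 0 = - coords x i 0.
Proof. by rewrite -scaleN1r coordsZ mulN1r. Qed.

Lemma coords_sum I (r : seq I) (P : pred I) (F : I -> V) k :
  coords (\sum_(i <- r | P i) F i) k 0 = \sum_(i <- r | P i) coords (F i) k 0.
Proof. by rewrite /Defs.coords mulmx_sumr summxE. Qed.

Lemma coords_alpha j i : coords (alpha j) i 0 = (i == j)%:R.
Proof.
rewrite (_ : alpha j = \sum_k (k == j)%:R *: alpha k) ?coords_comb //.
rewrite (bigD1 j) //= eqxx scale1r big1 ?addr0 // => k /negPf ->.
by rewrite scale0r.
Qed.

Lemma coords_eq0 x : (forall i, coords x i 0 = 0) -> x = 0.
Proof. by move=> x0; rewrite (coords_expand x) big1 // => i _; rewrite x0 scale0r. Qed.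

Lemma pairing_coords y x : pairing y x = \sum_i coords x i 0 * pairing y (alpha i).
Proof.
by rewrite {1}(coords_expand x) pairing_sumr; apply: eq_bigr => i _; rewrite pairingZr.
Qed.

Lemma root_coords b : b \in Phi -> exists c : 'I_n -> nat,
  (forall i, coords b i 0 = (c i)%:R) \/ (forall i, coords b i 0 = - (c i)%:R).
Proof.
case: hbase => _ _ /[apply] -[c [->|->]]; exists c; [left|right] => i.
  by rewrite coords_comb.
by rewrite coordsN coords_comb.
Qed.

Lemma posroot_Phi b : posroot b -> b \in Phi.
Proof. by case/andP. Qed.

Lemma posroot_coords b : posroot b -> forall i, 0 <= coords b i 0.
Proof. by case/andP => _ /forallP. Qed.

Lemma nonpos_notposroot b : b \in Phi -> (forall i, coords b i 0 <= 0) -> ~~ posroot b.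
Proof.
move=> bP b_le0; apply/negP => /posroot_coords b_ge0.
have b0 : b = 0 by apply: coords_eq0 => i; apply/le_anti; rewrite b_le0 b_ge0.
by move/Phi_neq0: bP; rewrite b0 eqxx.
Qed.

Lemma notposroot_coords b : b \in Phi -> ~~ posroot b -> forall i, coords b i 0 <= 0.
Proof.
move=> bP; have [c [cb|cb]] := root_coords bP.
  by rewrite /Defs.posroot bP /=; case/forallPn => i; rewrite cb ler0n.
by move=> _ i; rewrite cb oppr_le0 ler0n.
Qed.

Lemma posrootN b : b \in Phi -> posroot (- b) = ~~ posroot b.
Proof.
move=> bP; apply/idP/idP => [/posroot_coords Nb_ge0|nb].
  by apply: nonpos_notposroot => // i; have := Nb_ge0 i; rewrite coordsN oppr_ge0.
rewrite /Defs.posroot Phi_opp //=; apply/forallP => i.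
by rewrite coordsN oppr_ge0 notposroot_coords.
Qed.

Lemma posroot_alpha j : posroot (alpha j).
Proof.
by rewrite /Defs.posroot Phi_alpha; apply/forallP => i; rewrite coords_alpha ler0n.
Qed.

Lemma sref_posroot j d : posroot d -> d != alpha j -> posroot (sref j *m d).
Proof.
move=> dp dj; have dP := posroot_Phi dp.
have [i /andP[ij di]] : exists i, (i != j) && (0 < coords d i 0).
  apply/existsP; apply: contraT => /existsPn d_on_j.
  have dE : d = coords d j 0 *: alpha j.
    rewrite {1}(coords_expand d) (bigD1 j) //= big1 ?addr0 // => i ij.
    have := d_on_j i; rewrite ij /= -leNgt => di.
    by rewrite (@le_anti _ _ (coords d i 0) 0) ?di ?posroot_coords // scale0r.
  have [c1|cN1] : coords d j 0 = 1 \/ coords d j 0 = -1.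
    by apply: Phi_reduced (Phi_alpha j) _; rewrite -dE.
    by move: dj; rewrite dE c1 scale1r eqxx.
  by move: dp; rewrite dE cN1 scaleN1r posrootN ?Phi_alpha // posroot_alpha.
apply/negPn/negP => /(notposroot_coords (Phi_refl (Phi_alpha j) dP))/(_ i).
by rewrite reflE coordsB coordsZ coords_alpha (negPf ij) mulr0 subr0 leNgt di.
Qed.

Lemma sref_posrootE j d : d \in Phi -> d != alpha j -> d != - alpha j ->
  posroot (sref j *m d) = posroot d.
Proof.
move=> dP dj dNj; have [dp|dn] := boolP (posroot d); first exact: sref_posroot.
apply/negP => sdp; have Ndp : posroot (- d) by rewrite posrootN.
have Ndj : - d != alpha j by rewrite eqr_oppLR.
have := sref_posroot Ndp Ndj; rewrite mulmxN posrootN ?sdp //.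
exact/Phi_refl/dP/Phi_alpha.
Qed.


Definition hvec : V := invmx Amat^T *m const_mx 1.

Lemma pairing_hvec x : pairing hvec x = \sum_i coords x i 0.
Proof.
rewrite {1}(coords_expand x) -Amat_mul pairingC pairing_mulmxl pairingC.
rewrite /hvec mulmxA mulmxV ?unitmx_tr ?Amat_unit // mul1mx pairingE.
by apply: eq_bigr => i _; rewrite mxE mul1r.
Qed.

Lemma pairing_hvec_gt0 b : posroot b -> 0 < pairing hvec b.
Proof.
move=> bp; rewrite pairing_hvec lt_def psumr_eq0 => [|i _]; last exact: posroot_coords.
rewrite sumr_ge0 ?andbT => [|i _]; last exact: posroot_coords.
apply/negP => /allP b0; move/negP: (Phi_neq0 (posroot_Phi bp)); apply.
by apply/eqP/coords_eq0 => i; apply/eqP/b0; rewrite mem_index_enum.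
Qed.

Lemma pairing_hvec_lt0 b : b \in Phi -> ~~ posroot b -> pairing hvec b < 0.
Proof. by move=> bP nb; rewrite -oppr_gt0 -pairingNr pairing_hvec_gt0 // posrootN. Qed.

Lemma pairing_hvec_nat b : posroot b -> exists m : nat, pairing hvec b = m%:R.
Proof.
move=> bp; have [c [cb|cb]] := root_coords (posroot_Phi bp).
  by exists (\sum_i c i)%N; rewrite pairing_hvec natr_sum; apply: eq_bigr => i _.
exfalso; move: (pairing_hvec_gt0 bp); rewrite pairing_hvec ltNge sumr_le0 // => i _.
by rewrite cb oppr_le0.
Qed.

(** * The Weyl group *)

Lemma wordmx_cat s t : wordmx (s ++ t) = wordmx s *m wordmx t.
Proof. by elim: s => [|a s IH] /=; rewrite ?mul1mx // IH mulmxA. Qed.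

Lemma trmx_wordmx s : (wordmx s)^T = wordmx (rev s).
Proof.
elim: s => [|a s IH] /=; first by rewrite trmx1.
by rewrite trmx_mul IH rev_cons -cats1 wordmx_cat /= mulmx1 /sref trmx_refl.
Qed.

Lemma inW0_orthmx w : inW0 w -> orthmx w.
Proof.
case=> s <-; elim: s => [|a s IH] /=; first exact: orthmx1.
exact/orthmx_mul/IH/orthmx_refl/alpha_neq0.
Qed.

Lemma inW0_Phi w a : inW0 w -> a \in Phi -> w *m a \in Phi.
Proof.
case=> s <-; elim: s a => [|j s IH] a aP /=; first by rewrite mul1mx.
by rewrite -mulmxA Phi_refl ?Phi_alpha ?IH.
Qed.

Lemma inW0_tr w : inW0 w -> inW0 w^T.
Proof. by case=> s <-; exists (rev s); rewrite trmx_wordmx. Qed.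

Lemma inW0_mul w v : inW0 w -> inW0 v -> inW0 (w *m v).
Proof. by case=> s <- [t <-]; exists (s ++ t); rewrite wordmx_cat. Qed.

Lemma inW0_sref j : inW0 (sref j).
Proof. by exists [:: j]; rewrite /= mulmx1. Qed.

(* Induction on the height, which some simple reflection lowers. *)
Lemma posroot_W0_alpha b : posroot b -> exists x i, inW0 x /\ b = x *m alpha i.
Proof.
move=> bp; have [k hk] := pairing_hvec_nat bp.
have {hk} : pairing hvec b <= k%:R by rewrite hk.
elim: k b bp => [|k IH] b bp hk.
  by have := lt_le_trans (pairing_hvec_gt0 bp) hk; rewrite ltxx.
have [/existsP [i /eqP ->]|/existsPn nb] := boolP [exists i, b == alpha i].
  by exists 1%:M, i; rewrite mul1mx; split => //; exists [::].
have [i [bi_gt0 pbi_gt0]] : exists i, 0 < coords b i 0 /\ 0 < pairing b (alpha i).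
  apply: NNPP => none; move: (pairing_self_gt0 (Phi_neq0 (posroot_Phi bp))).
  apply/negP; rewrite -leNgt [X in pairing X _]coords_expand pairing_suml.
  apply: sumr_le0 => i _; rewrite pairingZl pairingC.
  have [bi0|bi_neq0] := eqVneq (coords b i 0) 0; first by rewrite bi0 mul0r.
  have bi_gt0 : 0 < coords b i 0 by rewrite lt_def bi_neq0 posroot_coords.
  by rewrite pmulr_rle0 // leNgt; apply/negP => ?; apply: none; exists i.
have b_ge1 : 1 <= pairing b (coroot (alpha i)).
  apply: int_ge1; first exact/Phi_coroot_int/posroot_Phi/bp/Phi_alpha.
  by rewrite -sgr_gt0 sg_pairing_coroot ?alpha_neq0 // sgr_gt0.
have hi : pairing hvec (alpha i) = 1.
  rewrite pairing_hvec (bigD1 i) //= coords_alpha eqxx big1 ?addr0 // => l li.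
  by rewrite coords_alpha (negPf li).
have : pairing hvec (sref i *m b) <= k%:R.
  by rewrite reflE pairingBr pairingZr hi mulr1; move: hk; rewrite -natr1; lra.
case/(IH _ (sref_posroot bp (nb i))) => x [l [hx sbE]].
exists (sref i *m x), l; split; first exact: inW0_mul (inW0_sref i) hx.
by rewrite -mulmxA -sbE mulmxA sref_invol mul1mx.
Qed.

Lemma inW0_refl b : b \in Phi -> inW0 (refl b).
Proof.
wlog bp : b / posroot b.
  move=> posW bP; case bp: (posroot b); first exact: posW.
  by rewrite -reflN; apply: posW; rewrite ?posrootN ?Phi_opp ?bp.
move=> _; have [x [i [hx ->]]] := posroot_W0_alpha bp.
rewrite refl_conj ?alpha_neq0 //; last exact: inW0_orthmx.
by apply: inW0_mul; [apply: inW0_mul hx (inW0_sref i) | apply: inW0_tr].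
Qed.

Lemma big_Phi_W0 w (F : V -> R) : inW0 w ->
  \sum_(a <- Phi) F a = \sum_(a <- Phi) F (w *m a).
Proof.
move=> hw; have ow := inW0_orthmx hw.
rewrite -(big_map (mulmx w) xpredT F); apply: perm_big.
have w_inj : injective (mulmx w : V -> V).
  by move=> x y wxy; rewrite -[x]mul1mx -ow -mulmxA wxy mulmxA ow mul1mx.
apply: uniq_perm; rewrite ?(map_inj_uniq w_inj) ?Phi_uniq // => x.
apply/idP/mapP => [xP|[y yP ->]]; last exact: inW0_Phi.
exists (w^T *m x); first exact/inW0_Phi/xP/inW0_tr.
by rewrite mulmxA orthmxC // mul1mx.
Qed.

(** * Inversions *)

Definition ind (b : bool) : R := (b : nat)%:R.

Lemma ind_and a b : ind (a && b) = ind a * ind b.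
Proof. by case: a; case: b; rewrite /ind /= ?mulr1 ?mulr0. Qed.

Lemma ind_ge0 b : 0 <= ind b. Proof. exact: ler0n. Qed.

Lemma ind_le1 b : ind b <= 1. Proof. by case: b; rewrite /ind ?ler01. Qed.

(* [ninv (w *m hvec)] is the length of [w] ([ell_hvec]), and [ninv (w *m Lam)]
   that of a minimal coset representative [w] ([ell_Jreduced]). *)
Definition ninv (mu : V) : R :=
  \sum_(d <- Phi) ind (~~ posroot d && (0 < pairing mu d)).

Lemma ninv_W0 w mu : inW0 w ->
  ninv (w *m mu) = \sum_(d <- Phi) ind (~~ posroot (w *m d) && (0 < pairing mu d)).
Proof.
move=> hw; rewrite /ninv (big_Phi_W0 _ hw); apply: eq_bigr => d _.
by rewrite pairing_orthmx //; apply: inW0_orthmx.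
Qed.

Definition negdiff th d := ind (~~ posroot d) - ind (~~ posroot (refl th *m d)).

Lemma negdiff_refl th d : th \in Phi -> negdiff th (refl th *m d) = - negdiff th d.
Proof. by move=> tP; rewrite /negdiff mulmxA refl_invol ?Phi_neq0 // mul1mx opprB. Qed.

Lemma negdiff_orth th d : pairing d (coroot th) = 0 -> negdiff th d = 0.
Proof. by move=> d0; rewrite /negdiff reflE d0 scale0r subr0 subrr. Qed.

Lemma ninv_refl th mu : th \in Phi ->
  ninv mu - ninv (refl th *m mu) = \sum_(d <- Phi) ind (0 < pairing mu d) * negdiff th d.
Proof.
move=> tP; rewrite {2}/ninv (big_Phi_W0 _ (inW0_refl tP)) /ninv -sumrB.
apply: eq_bigr => d _.
by rewrite pairing_refl ?Phi_neq0 // !ind_and mulrBr !(mulrC (ind (0 < _))).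
Qed.

(* Pair [d] with [refl th *m d]; only the [d] with [0 < <d, th^v>] leaving the
   half-space [0 < (mu, _)] under [refl th] survive. *)
Lemma sum_refl_antisym th mu (F : V -> R) : th \in Phi -> 0 < pairing mu th ->
  (forall d, F (refl th *m d) = - F d) ->
  (forall d, pairing d (coroot th) = 0 -> F d = 0) ->
  \sum_(d <- Phi) ind (0 < pairing mu d) * F d =
  \sum_(d <- Phi) ind ([&& 0 < pairing mu d, 0 < pairing d (coroot th)
                         & ~~ (0 < pairing mu (refl th *m d))]) * F d.
Proof.
move=> tP mu_th F_anti F_orth; have nz := Phi_neq0 tP.
set k := fun d => pairing d (coroot th).
have split_sign : \sum_(d <- Phi) ind (0 < pairing mu d) * F d =
   \sum_(d <- Phi) (ind ((0 < pairing mu d) && (0 < k d)) * F d +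
                    ind ((0 < pairing mu d) && (k d < 0)) * F d).
  apply: eq_bigr => d _; rewrite !ind_and -mulrDl -mulrDr.
  case: (ltgtP (k d) 0) => kd; rewrite /ind /= ?add0r ?addr0 ?mul1r ?mulr1 //.
  by rewrite F_orth // !mulr0.
rewrite split_sign big_split /= [X in _ + X](big_Phi_W0 _ (inW0_refl tP)) -big_split /=.
apply: eq_bigr => d _.
rewrite F_anti /k pairing_refl_coroot // oppr_lt0 mulrN -mulrBl; congr (_ * _).
have -> : pairing mu (refl th *m d) = pairing mu d - pairing d (coroot th) * pairing mu th.
  by rewrite reflE pairingBr pairingZr.
have [kd|kd] := ltrP 0 (pairing d (coroot th)); last by rewrite /ind !andbF subrr.
have [mud|mud] /= := ltrP 0 (pairing mu d).
  by case: (ltrP 0 _) => ?; rewrite /ind /= ?subrr ?subr0.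
have : pairing mu d - pairing d (coroot th) * pairing mu th < 0.
  by rewrite subr_lt0 (le_lt_trans mud) // mulr_gt0.
by move=> /ltW; rewrite leNgt => /negPf ->; rewrite /ind /= subrr.
Qed.

Lemma sum_Phi_ge_term x (G : V -> R) : x \in Phi ->
  (forall d, d \in Phi -> 0 <= G d) -> G x <= \sum_(d <- Phi) G d.
Proof.
move=> xP G_ge0; rewrite (bigD1_seq x) ?Phi_uniq //= lerDl.
by rewrite big_seq_cond sumr_ge0 // => d /andP[/G_ge0].
Qed.

Lemma ind_refl_self th mu : th \in Phi -> 0 < pairing mu th ->
  ind [&& 0 < pairing mu th, 0 < pairing th (coroot th)
        & ~~ (0 < pairing mu (refl th *m th))] = 1.
Proof.
move=> tP mu_th; have nz := Phi_neq0 tP.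
by rewrite mu_th pairing_coroot_self // refl_self // pairingNr oppr_gt0 ltr0n -leNgt ltW.
Qed.

Lemma ninv_refl_sum th mu : th \in Phi -> 0 < pairing mu th ->
  ninv mu - ninv (refl th *m mu) =
  \sum_(d <- Phi) ind ([&& 0 < pairing mu d, 0 < pairing d (coroot th)
                         & ~~ (0 < pairing mu (refl th *m d))]) * negdiff th d.
Proof.
move=> tP mu_th; rewrite ninv_refl // (sum_refl_antisym (th := th) (F := negdiff th)) //.
  by move=> d; apply: negdiff_refl.
exact: negdiff_orth.
Qed.

Lemma negdiff_self th : posroot th -> negdiff th th = -1.
Proof.
move=> tp; have tP := posroot_Phi tp.
by rewrite /negdiff refl_self ?Phi_neq0 // posrootN // tp /ind /= sub0r.
Qed.

(* [refl th *m d = d - <d, th^v> th] only lowers the coordinates of [d]. *)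
Lemma negdiff_le0 th d : posroot th -> d \in Phi -> 0 < pairing d (coroot th) ->
  negdiff th d <= 0.
Proof.
move=> tp dP d_th; rewrite /negdiff subr_le0.
case dp: (posroot d); first exact: ind_ge0.
suff -> : ~~ posroot (refl th *m d) by [].
apply: nonpos_notposroot; first exact/Phi_refl/dP/posroot_Phi.
move=> i; rewrite reflE coordsB coordsZ subr_le0.
apply: le_trans (notposroot_coords dP (negbT dp) i) _.
by rewrite mulr_ge0 ?posroot_coords // ltW.
Qed.

Lemma ninv_refl_posroot th mu : posroot th -> 0 < pairing mu th ->
  ninv mu - ninv (refl th *m mu) <= -1.
Proof.
move=> tp mu_th; have tP := posroot_Phi tp.
rewrite ninv_refl_sum // -lerN2 opprK -sumrN.
apply: le_trans (sum_Phi_ge_term tP _) => [|d dP].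
  by rewrite ind_refl_self // mul1r negdiff_self // opprK.
rewrite oppr_ge0; case/boolP: [&& _, _ & _] => [/and3P[_ d_th _]|_].
  by rewrite mul1r negdiff_le0.
by rewrite mul0r.
Qed.

Definition coroot_sum mu th := \sum_(d <- Phi | 0 < pairing mu d) pairing d (coroot th).

Lemma ninv_refl_le th mu : th \in Phi -> 0 < pairing mu th ->
  ninv mu - ninv (refl th *m mu) <= coroot_sum mu th - 1.
Proof.
move=> tP mu_th; have nz := Phi_neq0 tP.
have -> : coroot_sum mu th =
    \sum_(d <- Phi) ind (0 < pairing mu d) * pairing d (coroot th).
  rewrite /coroot_sum big_mkcond; apply: eq_bigr => d _.
  by case: ifP; rewrite /ind /= ?mul1r ?mul0r.
rewrite ninv_refl_sum // (sum_refl_antisym (th := th) (F := fun d => pairing d (coroot th))) //; last first.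
  by move=> d; rewrite pairing_refl_coroot.
rewrite lerBrDr -lerBrDl -sumrB.
apply: le_trans (sum_Phi_ge_term tP _) => [|d dP].
  rewrite ind_refl_self // !mul1r pairing_coroot_self //.
  have := ind_le1 (~~ posroot th); have := ind_ge0 (~~ posroot (refl th *m th)).
  rewrite /negdiff; lra.
rewrite -mulrBr; case/boolP: [&& _, _ & _] => [/and3P[_ d_th _]|_]; last by rewrite mul0r.
rewrite mul1r subr_ge0 /negdiff (le_trans (lerB (ind_le1 _) (ind_ge0 _))) // subr0.
exact/int_ge1/d_th/Phi_coroot_int.
Qed.

Lemma ninv_sref_gt0 j mu : 0 < pairing mu (alpha j) -> ninv (sref j *m mu) = ninv mu + 1.
Proof.
move=> mu_j; have aP := Phi_alpha j.
suff : ninv mu - ninv (sref j *m mu) = -1 by lra.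
rewrite ninv_refl // (bigD1_seq (alpha j)) ?Phi_uniq //= big_seq_cond big1 ?addr0.
  by rewrite mu_j negdiff_self ?posroot_alpha // mul1r.
move=> d /andP[dP dj]; have [->|dNj] := eqVneq d (- alpha j).
  by rewrite pairingNr oppr_gt0 ltNge (ltW mu_j) mul0r.
by rewrite /negdiff sref_posrootE // subrr mulr0.
Qed.

Lemma ninv_sref j mu :
  ninv (sref j *m mu) = ninv mu + Num.sg (pairing mu (coroot (alpha j))).
Proof.
rewrite sg_pairing_coroot ?alpha_neq0 //.
have [mu_j|mu_j|mu_j] := ltgtP (pairing mu (alpha j)) 0.
- have smu_j : 0 < pairing (sref j *m mu) (alpha j).
    by rewrite pairing_refl_self ?alpha_neq0 // oppr_gt0.
  have := ninv_sref_gt0 smu_j; rewrite mulmxA sref_invol mul1mx => ->.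
  by rewrite ltr0_sg // addrK.
- by rewrite gtr0_sg // ninv_sref_gt0.
- by rewrite mu_j sgr0 addr0 reflE corootE mu_j mulr0 scale0r subr0.
Qed.

Lemma coroot_sum_W0 x mu th : inW0 x ->
  coroot_sum (x *m mu) (x *m th) = coroot_sum mu th.
Proof.
move=> hx; have ox := inW0_orthmx hx.
rewrite /coroot_sum big_mkcond [RHS]big_mkcond (big_Phi_W0 _ hx) /=.
apply: eq_bigr => d _; rewrite pairing_orthmx //.
by case: ifP => // _; rewrite !corootE !pairing_orthmx.
Qed.

Lemma refl_W0 x th (mu : V) : inW0 x -> th \in Phi ->
  refl (x *m th) *m (x *m mu) = x *m refl th *m mu.
Proof.
move=> hx tP; have ox := inW0_orthmx hx.
by rewrite refl_conj ?Phi_neq0 // -!mulmxA (mulmxA x^T) ox mul1mx.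
Qed.

(* A Bruhat, resp. quantum, edge between [mu] and [refl th *m mu], with lengths
   read off through [ninv] (see [qbg_edge_ninv_edge]). *)
Definition ninv_edge mu th :=
  ninv (refl th *m mu) = ninv mu + 1 \/
  ninv (refl th *m mu) = ninv mu - coroot_sum mu th + 1.

Lemma ninv_refl_succ_posroot th mu : th \in Phi -> 0 < pairing mu th ->
  ninv (refl th *m mu) = ninv mu + 1 -> posroot th.
Proof.
move=> tP mu_th succ; apply: contraT => nt; have nz := Phi_neq0 tP.
have := @ninv_refl_posroot (- th) (refl th *m mu).
rewrite posrootN // nt pairingNr pairing_refl_self // opprK mu_th reflN.
by rewrite mulmxA refl_invol // mul1mx succ => /(_ isT isT); lra.
Qed.

(* Conjugated by [sref j] with [th <> +-alpha j], the drop of [ninv] along the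
   edge still obeys the bound the edge attains ([ninv_refl_posroot],
   [ninv_refl_le]); [ninv_sref] turns this into a comparison of signs. *)
Lemma ninv_edge_sg_le mu th j : th \in Phi -> 0 < pairing mu th -> ninv_edge mu th ->
  th != alpha j -> th != - alpha j ->
  Num.sg (pairing mu (coroot (alpha j))) <=
  Num.sg (pairing (refl th *m mu) (coroot (alpha j))).
Proof.
move=> tP mu_th edge tj tNj; have sj := inW0_sref j.
have smu_th : 0 < pairing (sref j *m mu) (sref j *m th).
  by rewrite pairing_refl ?alpha_neq0.
have conj : sref j *m (refl th *m mu) = refl (sref j *m th) *m (sref j *m mu).
  by rewrite refl_W0 // mulmxA.
suff : ninv (sref j *m mu) - ninv (sref j *m (refl th *m mu)) <=
       ninv mu - ninv (refl th *m mu).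
  by rewrite (ninv_sref j mu) (ninv_sref j (refl th *m mu)); lra.
rewrite conj; case: edge => e.
  have sthp : posroot (sref j *m th).
    by rewrite sref_posrootE // (ninv_refl_succ_posroot tP mu_th e).
  by have := ninv_refl_posroot sthp smu_th; lra.
have := ninv_refl_le (Phi_refl (Phi_alpha j) tP) smu_th.
by rewrite coroot_sum_W0 //; lra.
Qed.

(** * Lengths *)

Local Notation ell := (ell alpha).

Lemma ex_least_nat (Q : nat -> Prop) k :
  Q k -> exists m, Q m /\ forall k', Q k' -> (m <= k')%N.
Proof.
elim: k {-2}k (leqnn k) => [|k IH] k0 k0k Qk0.
  by exists k0; split => // k' _; move: k0k; rewrite leqn0 => /eqP ->.
case: (classic (exists k', (k' < k0)%N /\ Q k')) => [[k' [k'k0 Qk']]|none].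
  by apply: (IH k') => //; rewrite -ltnS (leq_trans k'k0).
exists k0; split => // k' Qk'; rewrite leqNgt; apply/negP => k'k0; apply: none.
by exists k'.
Qed.

Lemma has_word_of_sizeP w k :
  has_word_of_size alpha w k <-> exists s, size s = k /\ wordmx s = w.
Proof.
split => [/existsP [t /eqP <-]|[s [<- <-]]]; first by exists t; rewrite size_tuple.
by apply/existsP; exists (in_tuple s).
Qed.

Lemma ellP w : inW0 w ->
  (exists s, size s = ell w /\ wordmx s = w) /\
  (forall s, wordmx s = w -> (ell w <= size s)%N).
Proof.
move=> [s0 s0w]; rewrite /Defs.ell.
case: excluded_middle_informative => [some|none]; last first.
  by exfalso; apply: none; exists (size s0); apply/has_word_of_sizeP; exists s0.
case: ex_minnP => m /has_word_of_sizeP wm m_min; split => // s sw.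
by apply: m_min; apply/has_word_of_sizeP; exists s.
Qed.

Lemma ninv_hvec : ninv hvec = 0.
Proof.
rewrite /ninv big_seq big1 // => d dP; case dp: (posroot d) => //=.
by rewrite ltNge ltW ?pairing_hvec_lt0 ?dp.
Qed.

Lemma ninv_wordmx_le s mu : ninv (wordmx s *m mu) <= ninv mu + (size s)%:R.
Proof.
elim: s => [|j s IH] /=; first by rewrite mul1mx addr0.
rewrite -mulmxA ninv_sref -natr1; set p := pairing _ _.
suff : Num.sg p <= 1 by lra.
by case: sgrP => _; lra.
Qed.

Lemma ninv_le_ell x mu : inW0 x -> ninv mu = 0 -> ninv (x *m mu) <= (ell x)%:R.
Proof.
move=> hx mu0; have [[s [<- <-]] _] := ellP hx.
by have := ninv_wordmx_le s mu; rewrite mu0 add0r.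
Qed.

Lemma exchange t g : posroot g -> ~~ posroot ((wordmx t)^T *m g) ->
  exists t1 a t2, t = t1 ++ a :: t2 /\ refl g *m wordmx t = wordmx (t1 ++ t2).
Proof.
elim: t g => [|a t IH] g gp /=; first by rewrite trmx1 mul1mx gp.
rewrite trmx_mul /sref trmx_refl -/(sref a) -mulmxA => ng.
have [->|ga] := eqVneq g (alpha a).
  by exists [::], a, t; rewrite mulmxA sref_invol mul1mx.
have [t1 [a' [t2 [-> t12]]]] := IH _ (sref_posroot gp ga) ng.
exists (a :: t1), a', t2; split => //=.
have := refl_conj (orthmx_refl (alpha_neq0 a)) (Phi_neq0 (posroot_Phi gp)).
by rewrite trmx_refl -/(sref a) -t12 => ->; rewrite !mulmxA sref_invol mul1mx.
Qed.

Lemma pairing_W0_hvec_neq0 y a : inW0 y -> a \in Phi -> pairing (y *m hvec) a != 0.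
Proof.
move=> hy aP; rewrite pairing_mulmxl.
have yaP : y^T *m a \in Phi by apply: inW0_Phi => //; apply: inW0_tr.
case yap: (posroot (y^T *m a)); first by rewrite gt_eqF ?pairing_hvec_gt0.
by rewrite lt_eqF ?pairing_hvec_lt0 ?yap.
Qed.

(* Exchange condition at the first letter that does not add an inversion. *)
Lemma shorter_word s : ninv (wordmx s *m hvec) < (size s)%:R ->
  exists s', (size s' < size s)%N /\ wordmx s' = wordmx s.
Proof.
elim: s => [|j t IH] /=; first by rewrite mul1mx ninv_hvec ltxx.
have [lt _|ge] := ltrP (ninv (wordmx t *m hvec)) (size t)%:R.
  by have [t' [st' <-]] := IH lt; exists (j :: t').
rewrite -mulmxA ninv_sref sg_pairing_coroot ?alpha_neq0 // -natr1.
set p := pairing _ _ => lt.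
have p_lt0 : p < 0.
  have p_neq0 : p != 0 by apply: pairing_W0_hvec_neq0; [exists t | apply: Phi_alpha].
  rewrite lt_neqAle p_neq0 leNgt; apply/negP => /gtr0_sg p1.
  by move: lt; rewrite p1; lra.
have np : ~~ posroot ((wordmx t)^T *m alpha j).
  apply/negP => /pairing_hvec_gt0; move: p_lt0.
  by rewrite /p pairing_mulmxl ltNge => /negP nle /ltW.
have [t1 [a [t2 [-> tE]]]] := exchange (posroot_alpha j) np.
exists (t1 ++ t2); split; last by rewrite tE.
by rewrite !size_cat /= addnS ltnS leqnSn.
Qed.

Lemma ell_hvec y : inW0 y -> (ell y)%:R = ninv (y *m hvec).
Proof.
move=> hy; apply/le_anti/andP; split; last exact: ninv_le_ell ninv_hvec.
have [[s [ys sy]] ell_min] := ellP hy.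
case: (ltrP (ninv (y *m hvec)) (size s)%:R) => [lt|]; last by rewrite ys.
rewrite -sy in lt; have [s' [s's s'y]] := shorter_word lt.
by have := ell_min s'; rewrite s'y sy -ys leqNgt s's => /(_ erefl).
Qed.

Lemma ell_tr y : inW0 y -> ell y^T = ell y.
Proof.
move=> hy; have [[s [ys sy]] ell_min] := ellP hy.
have [[s' [ys' s'y]] ell_min'] := ellP (inW0_tr hy).
apply/eqP; rewrite eqn_leq; apply/andP; split.
  by rewrite -ys -size_rev ell_min' // -sy trmx_wordmx.
by rewrite -ys' -size_rev ell_min // -trmx_wordmx s'y trmxK.
Qed.

Lemma ell_mul_sref y i : inW0 y ->
  (ell (y *m sref i))%:R = (ell y)%:R + Num.sg (pairing hvec (y *m alpha i)).
Proof.
move=> hy.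
rewrite -(ell_tr (inW0_mul hy (inW0_sref i))) trmx_mul /sref trmx_refl -/(sref i) ell_hvec; last first.
  by apply: inW0_mul (inW0_sref i) (inW0_tr hy).
rewrite -mulmxA ninv_sref -ell_hvec; last exact: inW0_tr.
rewrite ell_tr //.
by rewrite sg_pairing_coroot ?alpha_neq0 // pairing_mulmxl trmxK.
Qed.


Lemma W0_fix_posroot v : inW0 v -> (forall a, posroot a -> posroot (v *m a)) -> v = 1%:M.
Proof.
move=> hv vpos; have [[s [sv sE]] _] := ellP hv.
have : (ell v)%:R = 0 :> R.
  rewrite ell_hvec // ninv_W0 // big_seq big1 // => d dP.
  case dp: (posroot d); first by rewrite vpos.
  by rewrite ltNge ltW ?pairing_hvec_lt0 ?dp // andbF.
by rewrite -sv -sE; case: s {sv sE} => [|a s] //= /eqP; rewrite pnatr_eq0.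
Qed.

(** * Minimal coset representatives *)

Section Weight.
Variable Lam : V.
Hypothesis hLam : forall j : 'I_n, exists m : nat, pairing Lam (coroot (alpha j)) = m%:R.

Local Notation inJ := (inJ alpha Lam).
Local Notation posrootJ := (posrootJ Phi alpha Lam).
Local Notation inWJ := (inWJ alpha Lam).
Local Notation inW0J := (inW0J alpha Lam).
Local Notation floor := (floor alpha Lam).

Lemma pairing_Lam_alpha_ge0 i : 0 <= pairing Lam (alpha i).
Proof.
have [m Lm] := hLam i.
by rewrite -sgr_ge0 -sg_pairing_coroot ?alpha_neq0 // sgr_ge0 Lm ler0n.
Qed.

Lemma inJE i : inJ i = (pairing Lam (alpha i) == 0).
Proof. by rewrite /Defs.inJ -sgr_eq0 sg_pairing_coroot ?alpha_neq0 // sgr_eq0. Qed.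

Lemma pairing_Lam_posroot_ge0 b : posroot b -> 0 <= pairing Lam b.
Proof.
move=> bp; rewrite pairing_coords sumr_ge0 // => i _.
by rewrite mulr_ge0 ?pairing_Lam_alpha_ge0 ?posroot_coords.
Qed.

Lemma pairing_Lam_notposroot_le0 b : b \in Phi -> ~~ posroot b -> pairing Lam b <= 0.
Proof.
by move=> bP nb; rewrite -oppr_ge0 -pairingNr pairing_Lam_posroot_ge0 // posrootN.
Qed.

Lemma posrootJE b : posrootJ b = posroot b && (pairing Lam b == 0).
Proof.
rewrite /Defs.posrootJ; case bp: (posroot b) => //=.
rewrite pairing_coords psumr_eq0 => [|i _]; last first.
  by rewrite mulr_ge0 ?pairing_Lam_alpha_ge0 ?posroot_coords.
apply/forallP/allP => [bJ i _|bJ i].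
  rewrite mulf_eq0; have := bJ i; rewrite inJE.
  by case: (pairing Lam (alpha i) == 0) => /=; [rewrite orbT | move=> ->].
rewrite inJE; apply/implyP => iJ; have := bJ i (mem_index_enum i).
by rewrite mulf_eq0 (negPf iJ) orbF.
Qed.

Lemma posroot_notJE b : b \in Phi -> (posroot b && ~~ posrootJ b) = (0 < pairing Lam b).
Proof.
move=> bP; rewrite posrootJE; case bp: (posroot b) => /=.
  by rewrite lt_def pairing_Lam_posroot_ge0 ?andbT.
by apply/esym/negbTE; rewrite -leNgt pairing_Lam_notposroot_le0 ?bp.
Qed.

Lemma inWJ_Lam v : inWJ v -> v *m Lam = Lam.
Proof.
case=> s [sJ <-]; elim: s sJ => [|a s IH] /=; first by rewrite mul1mx.
case/andP => aJ sJ; rewrite -mulmxA IH // reflE.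
by move: aJ => /eqP ->; rewrite scale0r subr0.
Qed.

Lemma inWJ_W0 v : inWJ v -> inW0 v.
Proof. by case=> s [_ <-]; exists s. Qed.

Lemma inWJ_mul v v' : inWJ v -> inWJ v' -> inWJ (v *m v').
Proof.
by case=> s [sJ <-] [t [tJ <-]]; exists (s ++ t); rewrite all_cat sJ tJ wordmx_cat.
Qed.

Lemma inWJ_tr v : inWJ v -> inWJ v^T.
Proof. by case=> s [sJ <-]; exists (rev s); rewrite all_rev sJ trmx_wordmx. Qed.

Lemma coroot_sum_Lam b :
  coroot_sum Lam b = 2 * pairing (rho Phi alpha - rhoJ Phi alpha Lam) (coroot b).
Proof.
rewrite /rho /rhoJ -scalerBr pairingZl mulrA divff ?mul1r ?pnatr_eq0 //.
rewrite (bigID posrootJ) /= addrAC.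
have -> : \sum_(i <- Phi | posroot i && posrootJ i) i = \sum_(i <- Phi | posrootJ i) i.
  by apply: eq_bigl => a; rewrite posrootJE; case: (posroot a).
rewrite subrr add0r pairing_suml big_seq_cond [LHS]big_seq_cond.
by apply: eq_bigl => a; case aP: (a \in Phi) => //=; rewrite posroot_notJE.
Qed.

Definition Jreduced y := inW0 y /\ forall i, inJ i -> posroot (y *m alpha i).

Lemma Jreduced_posrootJ y a : Jreduced y -> posrootJ a -> posroot (y *m a).
Proof.
move=> [hy yJ] /andP [ap /forallP aJ].
rewrite /Defs.posroot inW0_Phi ?posroot_Phi //=; apply/forallP => k.
rewrite {1}(coords_expand a) mulmx_sumr coords_sum sumr_ge0 // => i _.
rewrite -scalemxAr coordsZ; case/boolP: (inJ i) => iJ.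
  by rewrite mulr_ge0 ?posroot_coords ?yJ.
by have := aJ i; rewrite iJ /= => /eqP ->; rewrite mul0r.
Qed.

Lemma ninv_Lam : ninv Lam = 0.
Proof.
rewrite /ninv big_seq big1 // => d dP; case dp: (posroot d) => //=.
by rewrite ltNge pairing_Lam_notposroot_le0 ?dp.
Qed.

(* Counted through [hvec] and through [Lam], the inversions of [y] differ only by
   roots of [Delta_J^+], which [y] keeps positive. *)
Lemma ell_Jreduced y : Jreduced y -> (ell y)%:R = ninv (y *m Lam).
Proof.
move=> yJ; have hy := yJ.1; rewrite ell_hvec // !ninv_W0 //.
rewrite big_seq [RHS]big_seq; apply: eq_bigr => d dP; congr ind.
case dp: (posroot d) => /=; last first.
  rewrite ltNge ltW ?pairing_hvec_lt0 ?dp //.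
  by rewrite ltNge pairing_Lam_notposroot_le0 ?dp // !andbF.
rewrite pairing_hvec_gt0 //; case: (ltrP 0 (pairing Lam d)) => Ld; first by rewrite andbT.
have Ld0 : pairing Lam d = 0 by apply/le_anti; rewrite Ld pairing_Lam_posroot_ge0.
by rewrite Jreduced_posrootJ // posrootJE dp Ld0 eqxx.
Qed.

Lemma inW0J_Jreduced y : inW0J y -> Jreduced y.
Proof.
move=> [hy ymin]; split => // i iJ; apply: contraT => yi.
have siJ : inWJ (sref i) by exists [:: i]; rewrite /= iJ mulmx1.
have : (ell y)%:R <= (ell (y *m sref i))%:R :> R by rewrite ler_nat ymin.
rewrite ell_mul_sref // ltr0_sg; first lra.
by rewrite pairing_hvec_lt0 // inW0_Phi ?Phi_alpha.
Qed.

Lemma Jreduced_inW0J y : Jreduced y -> inW0J y.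
Proof.
move=> yJ; split; first exact: yJ.1.
move=> v hv; rewrite -(ler_nat R) ell_Jreduced // -{1}(inWJ_Lam hv) mulmxA.
exact/ninv_le_ell/ninv_Lam/inW0_mul/(inWJ_W0 hv)/yJ.1.
Qed.

Lemma floorP x : inW0 x -> Jreduced (floor x) /\ exists2 v, inWJ v & floor x = x *m v.
Proof.
move=> hx.
have ex : exists u, inW0J u /\ exists v, inWJ v /\ u = x *m v.
  pose Q k := exists v, inWJ v /\ ell (x *m v) = k.
  have Q1 : Q (ell (x *m 1%:M)) by exists 1%:M; split => //; exists [::].
  have [m [[v [hv xvm]] m_min]] := ex_least_nat Q1.
  exists (x *m v); split; last by exists v.
  split; first exact: inW0_mul hx (inWJ_W0 hv).
  move=> v' hv'; rewrite xvm -mulmxA; apply: m_min; exists (v *m v'); split => //.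
  exact: inWJ_mul.
rewrite /Defs.floor; case: excluded_middle_informative => [{}ex|//].
case: constructive_indefinite_description => u /= [uJ [v [hv uxv]]].
by split; [exact: inW0J_Jreduced | exists v].
Qed.

(* [u] and [u *m v] both map the positive roots of [J] to positive roots, and [v]
   fixes [Lam], so [v] has no inversion. *)
Lemma Jreduced_coset_unique u v : Jreduced u -> Jreduced (u *m v) -> inWJ v -> v = 1%:M.
Proof.
move=> uJ uvJ hv; have hv0 := inWJ_W0 hv.
apply: W0_fix_posroot => // a ap; have aP := posroot_Phi ap.
have vaP : v *m a \in Phi by apply: inW0_Phi.
have Lva : pairing Lam (v *m a) = pairing Lam a.
  by rewrite -{1}(inWJ_Lam hv) pairing_orthmx //; apply: inW0_orthmx.
apply: contraT => nva.
have La0 : pairing Lam a = 0.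
  by apply/le_anti; rewrite pairing_Lam_posroot_ge0 // -Lva pairing_Lam_notposroot_le0.
have : posroot (u *m v *m a) by rewrite Jreduced_posrootJ // posrootJE ap La0 eqxx.
rewrite -mulmxA -[v *m a]opprK mulmxN posrootN; last exact/inW0_Phi/Phi_opp/vaP/uJ.1.
by rewrite Jreduced_posrootJ // posrootJE posrootN // nva pairingNr Lva La0 oppr0 eqxx.
Qed.

Lemma floor_eq x u v : inW0 x -> Jreduced u -> inWJ v -> u = x *m v -> floor x = u.
Proof.
move=> hx uJ hv uE; have [fJ [v' hv' fE]] := floorP hx.
have ov' := inW0_orthmx (inWJ_W0 hv').
have uE' : u = floor x *m (v'^T *m v).
  by rewrite uE fE mulmxA -(mulmxA x) orthmxC // mulmx1.
have v1 : v'^T *m v = 1%:M.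
  by apply: Jreduced_coset_unique fJ _ (inWJ_mul (inWJ_tr hv') hv); rewrite -uE'.
by rewrite uE' v1 mulmx1.
Qed.

Lemma Jreduced_sref y j : Jreduced y ->
  pairing (y *m Lam) (coroot (alpha j)) != 0 ->
  Jreduced (sref j *m y) /\
  (ell (sref j *m y))%:R = (ell y)%:R + Num.sg (pairing (y *m Lam) (coroot (alpha j))).
Proof.
move=> yJ yj.
have syJ : Jreduced (sref j *m y).
  case: yJ => hy yJ; split; first exact: inW0_mul (inW0_sref j) hy.
  move=> i iJ; have yip := yJ i iJ; have yiP := posroot_Phi yip.
  rewrite -mulmxA sref_posrootE //.
    have oy := inW0_orthmx hy.
    apply: contra yj => /eqP <-; rewrite corootE !pairing_orthmx //.
    by move: iJ; rewrite inJE => /eqP ->; rewrite mulr0.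
  by apply: contraTneq yip => ->; rewrite posrootN ?Phi_alpha // posroot_alpha.
by split => //; rewrite !ell_Jreduced // -mulmxA ninv_sref.
Qed.

Lemma qbg_edge_ninv_edge w b : qbg_edge Phi alpha Lam w b (floor (w *m refl b)) ->
  [/\ Jreduced w, b \in Phi, 0 < pairing Lam b & ninv_edge (w *m Lam) (w *m b)].
Proof.
case=> /inW0J_Jreduced wJ /andP[bp nbJ] _ lens.
have bP := posroot_Phi bp; have hw := wJ.1.
have [uJ [v hv uE]] := floorP (inW0_mul hw (inW0_refl bP)).
split => //; first by rewrite -posroot_notJE // bp.
have uLam : floor (w *m refl b) *m Lam = refl (w *m b) *m (w *m Lam).
  by rewrite uE -mulmxA inWJ_Lam // refl_W0.
rewrite /ninv_edge -uLam -!ell_Jreduced // coroot_sum_W0 // coroot_sum_Lam.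
by case: lens => ->; [left; rewrite -natr1 | right].
Qed.

Lemma qbg_edge_sg_le w b j : qbg_edge Phi alpha Lam w b (floor (w *m refl b)) ->
  w *m b != alpha j -> w *m b != - alpha j ->
  Num.sg (pairing (w *m Lam) (coroot (alpha j))) <=
  Num.sg (pairing (w *m refl b *m Lam) (coroot (alpha j))).
Proof.
case/qbg_edge_ninv_edge => wJ bP Lb edge wbj wbNj; have hw := wJ.1.
rewrite -refl_W0 //; apply: ninv_edge_sg_le => //; first exact: inW0_Phi.
by rewrite pairing_orthmx //; apply: inW0_orthmx.
Qed.

Lemma qbg_edge_sref w b j : qbg_edge Phi alpha Lam w b (floor (w *m refl b)) ->
  pairing (w *m Lam) (coroot (alpha j)) != 0 ->
  Num.sg (pairing (w *m Lam) (coroot (alpha j))) =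
  Num.sg (pairing (w *m refl b *m Lam) (coroot (alpha j))) ->
  let u := floor (w *m refl b) in
  [/\ inW0J (sref j *m u), inW0J (sref j *m w)
    & qbg_edge Phi alpha Lam (sref j *m w) b (sref j *m u)].
Proof.
move=> edge p0 sg_pq u; have [wJ bP _ _] := qbg_edge_ninv_edge edge.
case: edge => _ bJ _ lens; rewrite -/u in lens.
have [uJ [v hv uE]] := floorP (inW0_mul wJ.1 (inW0_refl bP)); rewrite -/u in uJ uE.
have uLam : u *m Lam = w *m refl b *m Lam by rewrite uE -mulmxA inWJ_Lam.
have q0 : pairing (u *m Lam) (coroot (alpha j)) != 0.
  by rewrite -sgr_eq0 uLam -sg_pq sgr_eq0.
have [suJ ell_su] := Jreduced_sref uJ q0; have [swJ ell_sw] := Jreduced_sref wJ p0.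
rewrite uLam -sg_pq in ell_su.
split; try exact: Jreduced_inW0J.
split => //; first exact: Jreduced_inW0J.
- apply/esym/(floor_eq (v := v)) => //; last by rewrite uE !mulmxA.
  exact/inW0_mul/(inW0_refl bP)/inW0_mul/wJ.1/inW0_sref.
- case: lens => lens; [left | right]; last by rewrite ell_su ell_sw lens; lra.
  by apply/eqP; rewrite -(eqr_nat R) ell_su lens -!natr1 ell_sw; apply/eqP; lra.
Qed.

End Weight.
End RootSystem.

Unset Implicit Arguments.

Theorem lemma4p4 (R : realFieldType) (n : nat) (Phi : seq 'cV[R]_n)
  (alpha : 'I_n -> 'cV[R]_n) (Lam : 'cV[R]_n)
  (hPhi : is_reduced_irreducible_root_system Phi)
  (hbase : is_base Phi alpha)
  (hLam : forall j : 'I_n, exists m : nat, pairing Lam (coroot (alpha j)) = m%:R)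
  (w : 'M[R]_n) (b : 'cV[R]_n)
  (hedge : qbg_edge Phi alpha Lam w b (floor alpha Lam (w *m refl b)))
  (j : 'I_n) :
  let u := floor alpha Lam (w *m refl b) in
  let aj := coroot (alpha j) in
  [/\ (0 < pairing (w *m Lam) aj -> w *m b != alpha j -> w *m b != - alpha j ->
        [/\ 0 < pairing (w *m refl b *m Lam) aj,
            inW0J alpha Lam (sref alpha j *m u),
            inW0J alpha Lam (sref alpha j *m w)
          & qbg_edge Phi alpha Lam (sref alpha j *m w) b (sref alpha j *m u)]),
      (pairing (w *m refl b *m Lam) aj < 0 -> w *m b != alpha j -> w *m b != - alpha j ->
        [/\ pairing (w *m Lam) aj < 0,
            inW0J alpha Lam (sref alpha j *m u),
            inW0J alpha Lam (sref alpha j *m w)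
          & qbg_edge Phi alpha Lam (sref alpha j *m w) b (sref alpha j *m u)]),
      (pairing (w *m refl b *m Lam) aj < 0 -> 0 <= pairing (w *m Lam) aj ->
        w *m b = alpha j \/ w *m b = - alpha j)
    & (pairing (w *m refl b *m Lam) aj <= 0 -> 0 < pairing (w *m Lam) aj ->
        w *m b = alpha j \/ w *m b = - alpha j)].
Proof.
move=> u aj.
set p := pairing (w *m Lam) aj; set q := pairing (w *m refl b *m Lam) aj.
have sg_le := qbg_edge_sg_le hPhi hbase hLam hedge (j := j).
have diamond := qbg_edge_sref hPhi hbase hLam hedge (j := j).
have pm : (Num.sg p <= Num.sg q -> False) -> w *m b = alpha j \/ w *m b = - alpha j.
  move=> not_le; have [|wbj] := eqVneq (w *m b) (alpha j); first by left.
  have [|wbNj] := eqVneq (w *m b) (- alpha j); first by right.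
  by case: not_le; apply: sg_le.
split.
- move=> p_gt0 wbj wbNj; have q_gt0 := sgr_le_gt0 (sg_le wbj wbNj) p_gt0.
  have [] // := diamond (lt0r_neq0 p_gt0); by rewrite !gtr0_sg.
- move=> q_lt0 wbj wbNj; have p_lt0 := sgr_le_lt0 (sg_le wbj wbNj) q_lt0.
  have [] // := diamond (ltr0_neq0 p_lt0); by rewrite !ltr0_sg.
- move=> q_lt0 p_ge0; apply: pm => /sgr_le_ge0/(_ p_ge0).
  by rewrite leNgt q_lt0.
- move=> q_le0 p_gt0; apply: pm => /sgr_le_gt0/(_ p_gt0).
  by rewrite ltNge q_le0.
Qed.
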